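(* There is an absolute constant $c>0$ such that for every odd $n$, every mapping $\phi\colon\{0,1\}^n\to\{0,1\}^n$ from ${\sf XOR}$ to ${\sf Majority}$ satisfies ${\sf avgStretch}(\phi)\ge c\sqrt{n}$. On the other hand, there is an absolute constant $C$ such that for every odd $n$ there exists a $C$-Lipschitz mapping $\psi\colon\{0,1\}^n\to\{0,1\}^n$ from ${\sf Majority}$ to ${\sf XOR}$.
   Context: ${\sf XOR}(x)=\sum_i x_i \bmod 2$; ${\sf Majority}(x)=1$ iff $\sum_i x_i>n/2$. A mapping from $f$ to $g$ is a bijection $\psi$ of $\{0,1\}^n$ with $f(z)=g(\psi(z))$ for all $z$. ${\sf avgStretch}(\phi)=\mathbb{E}_{x,i}[{\sf dist}(\phi(x),\phi(x+e_i))]$ with $x$ uniform in $\{0,1\}^n$, $i$ uniform in $[n]$, $e_i$ the $i$-th unit vector, addition mod 2, ${\sf dist}$ Hamming distance. $C$-Lipschitz: ${\sf dist}(\psi(x),\psi(y))\le C\,{\sf dist}(x,y)$ for all $x,y$. *)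

From mathcomp Require Import all_boot all_order all_algebra all_fingroup all_field.
Set Implicit Arguments. Unset Strict Implicit. Unset Printing Implicit Defensive.
Import Order.TTheory GRing.Theory Num.Theory.
Local Open Scope ring_scope.

Definition cube (n : nat) := {ffun 'I_n -> bool}.

Definition XOR n (x : cube n) : bool := odd (\sum_(i < n) (x i : nat))%N.

Definition Majority n (x : cube n) : bool := (n < 2 * \sum_(i < n) (x i : nat))%N.

Definition dist n (x y : cube n) : nat := #|[set i : 'I_n | x i != y i]|%N.

Definition flip n (x : cube n) (i : 'I_n) : cube n :=
  [ffun j => if j == i then ~~ x j else x j].

Definition mapping_from n (f g : cube n -> bool) (phi : {perm cube n}) : Prop :=
  forall z, f z = g (phi z).

Definition avgStretch n (phi : cube n -> cube n) : algC :=
  (\sum_(x : cube n) \sum_(i < n) (dist (phi x) (phi (flip x i)))%:R)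
    / ((2 ^ n)%N%:R * n%:R).

Definition Lipschitz n (C : algC) (psi : cube n -> cube n) : Prop :=
  forall x y, ((dist (psi x) (psi y))%:R : algC) <= C * (dist x y)%:R.

From mathcomp Require Import all_boot all_order all_algebra all_fingroup all_field.
From mathcomp Require Import zify ring.
Import Order.TTheory GRing.Theory Num.Theory.
Set Implicit Arguments. Unset Strict Implicit.

(* Lower bound: a mapping from XOR to Majority sends both ends of every cube
   edge to opposite sides of the majority threshold, and a point of weight k
   lies at distance at least |2k - n|/2 from the other side.  Hence
   avgStretch >= E_y |2 w(y) - n| / 2.  Since (k+1) C(n,k+1) = (n-k) C(n,k),
   the sequence g k = k C(n,k) has increments of absolute value
   C(n,k) |2k - n|, so this expectation is at least 2 g((n+1)/2) / 2^n, which
   is of order sqrt n by the bound 16^m <= (4m+1) C(2m,m)^2.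
   Upper bound: psi(x)_i = x_i (+) x_(i+1) for i < n-1 and
   psi(x)_(n-1) = Maj(x) (+) x_0 (+) x_(n-1).  The XOR of psi(x) telescopes to
   Maj(x); the first n-1 bits determine x up to complement, and complementing
   flips the majority of an odd number of bits; a coordinate of x enters at
   most two of the first n-1 bits, and the last bit changes only if x does,
   so psi is 3-Lipschitz. *)

Definition weight n (x : cube n) : nat := \sum_(i < n) x i.

Definition cube_compl n (x : cube n) : cube n := [ffun i => ~~ x i].

Lemma dist_sum n (x y : cube n) : dist x y = \sum_(i < n) (x i != y i).
Proof.
rewrite /dist -sum1_card big_mkcond /=; apply: eq_bigr => i _.
by rewrite inE; case: (x i != y i).
Qed.

Lemma dist_sym n (x y : cube n) : dist x y = dist y x.
Proof. by rewrite !dist_sum; apply: eq_bigr => i _; rewrite eq_sym. Qed.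

Lemma dist_eq0 n (x y : cube n) : (dist x y == 0) = (x == y).
Proof.
rewrite dist_sum sum_nat_eq0; apply/forallP/eqP => [eq_xy | -> i].
  by apply/ffunP => i; have := eq_xy i; case: (x i); case: (y i).
by rewrite eqxx.
Qed.

Lemma weight_le_dist n (y z : cube n) : weight y <= weight z + dist y z.
Proof.
rewrite dist_sum /weight -big_split /=; apply: leq_sum => i _.
by case: (y i); case: (z i).
Qed.

Lemma weight_compl n (x : cube n) : weight (cube_compl x) + weight x = n.
Proof.
rewrite -big_split /= -[RHS]card_ord -sum1_card.
by apply: eq_bigr => i _; rewrite ffunE; case: (x i).
Qed.

Lemma Majority_compl n (x : cube n) : odd n ->
  Majority (cube_compl x) = ~~ Majority x.
Proof.
move=> odd_n; rewrite /Majority; have := weight_compl x; rewrite /weight.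
have := odd_double_half n; rewrite odd_n.
by rewrite -leqNgt => *; apply/idP/idP; lia.
Qed.

Lemma Majority_neq_dist n (y z : cube n) :
  Majority y != Majority z -> `|2 * weight y - n| <= 2 * dist y z.
Proof.
have := weight_le_dist y z; have := weight_le_dist z y; rewrite dist_sym.
rewrite /Majority -/(weight y) -/(weight z).
by case: ltnP; case: ltnP => //= *; lia.
Qed.

Lemma XOR_flip n (x : cube n) i : XOR (flip x i) = ~~ XOR x.
Proof.
rewrite /XOR (bigD1 i) //= [X in _ = ~~ odd X](bigD1 i) //= ffunE eqxx !oddD.
rewrite (eq_bigr (fun j => x j : nat)); last first.
  by move=> j /negbTE ne_ji; rewrite ffunE ne_ji.
by rewrite !oddb; case: (x i); rewrite /= ?negbK.
Qed.

Lemma sum_stretch_XOR_Majority n (phi : {perm cube n}) :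
  mapping_from (@XOR n) (@Majority n) phi ->
  n * \sum_(y : cube n) `|2 * weight y - n| <=
    2 * \sum_(x : cube n) \sum_(i < n) dist (phi x) (phi (flip x i)).
Proof.
move=> phi_map; rewrite (reindex_inj (@perm_inj _ phi)) /= big_distrr.
rewrite [X in _ <= X]big_distrr /=; apply: leq_sum => x _.
rewrite -[n in n * _]card_ord -sum_nat_const [X in _ <= X]big_distrr /=.
apply: leq_sum => i _; apply: Majority_neq_dist.
by rewrite -!phi_map XOR_flip; case: (XOR x).
Qed.

Lemma sum_weight n (F : nat -> nat) :
  \sum_(y : cube n) F (weight y) = \sum_(k < n.+1) 'C(n, k) * F k.
Proof.
rewrite (reindex (fun B : {set 'I_n} => [ffun i => i \in B])) /=; last first.
  exists (fun y : cube n => [set i | y i]) => [B _ | y _].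
    by apply/setP => i; rewrite inE ffunE.
  by apply/ffunP => i; rewrite ffunE inE.
have weight_set (B : {set 'I_n}) : weight [ffun i => i \in B] = #|B|.
  rewrite /weight -sum1_card [RHS]big_mkcond /=.
  by apply: eq_bigr => i _; rewrite ffunE; case: (i \in B).
under eq_bigr => B _ do rewrite weight_set.
rewrite (partition_big (fun B : {set 'I_n} => inord #|B| : 'I_n.+1) predT) //=.
apply: eq_bigr => k _.
rewrite (eq_bigl (fun B => B \in [set B : {set 'I_n} | #|B| == k])); last first.
  move=> B; have le_Bn : #|B| <= n by rewrite -[n in _ <= n]card_ord max_card.
  by rewrite inE -val_eqE /= inordK ?ltnS.
rewrite (eq_bigr (fun _ => F k)); last by move=> B; rewrite inE => /eqP ->.
by rewrite sum_nat_const card_draws card_ord.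
Qed.

Lemma distn_le_sum_steps (f : nat -> nat) a b : a <= b ->
  `|f a - f b| <= \sum_(a <= k < b) `|f k - f k.+1|.
Proof.
elim: b => [|b IHb]; first by rewrite leqn0 => /eqP ->; rewrite distnn.
rewrite leq_eqVlt => /orP[/eqP -> | lt_ab]; first by rewrite distnn.
by rewrite big_nat_recr //=; have := IHb lt_ab; lia.
Qed.

Lemma mul_bin_dist n k :
  'C(n, k) * `|2 * k - n| = `|k * 'C(n, k) - k.+1 * 'C(n, k.+1)|.
Proof.
rewrite mul_bin_left; have [le_kn | lt_nk] := leqP k n; last first.
  by rewrite bin_small // !muln0.
rewrite -[X in X * _]absz_nat -abszM !PoszM -(subzn le_kn).
by congr absz; ring.
Qed.

Lemma mul_bin_le_sum_deviation n j : j <= n.+1 ->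
  2 * (j * 'C(n, j)) <= \sum_(k < n.+1) 'C(n, k) * `|2 * k - n|.
Proof.
move=> le_jn; set g := fun k => k * 'C(n, k).
rewrite -(big_mkord xpredT (fun k => 'C(n, k) * `|2 * k - n|)).
under eq_bigr => k _ do rewrite mul_bin_dist -/(g k) -/(g k.+1).
rewrite (big_cat_nat (leq0n j) le_jn) /=.
have := distn_le_sum_steps g (leq0n j); have := distn_le_sum_steps g le_jn.
have g_end : g n.+1 = 0 by rewrite /g bin_small ?muln0.
by rewrite g_end -/(g j) [g 0]/g; lia.
Qed.

Lemma central_bin_sqr_lb m : 16 ^ m <= (4 * m + 1) * 'C(2 * m, m) ^ 2.
Proof.
elim: m => [// | m IHm]; rewrite [2 * m.+1]mulnS.
set b := 'C(2 * m, m) in IHm *; set b' := 'C((2 * m).+2, m.+1).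
have bin_step : m.+1 * b' = 2 * (2 * m + 1) * b.
  have := mul_bin_diag (2 * m).+2 m; have := mul_bin_diag (2 * m).+1 m.
  have := mul_bin_left (2 * m).+1 m.
  by rewrite /= (_ : (2 * m).+1 - m = m.+1); lia.
have coeff : 16 * m.+1 ^ 2 * (4 * m + 1) <= (4 * m + 5) * (4 * (2 * m + 1) ^ 2).
  by nia.
rewrite -(@leq_pmul2l (m.+1 ^ 2)) //.
have -> : m.+1 ^ 2 * ((4 * m.+1 + 1) * b' ^ 2) = (4 * m + 5) * (m.+1 * b') ^ 2.
  by rewrite expnMn; lia.
have := leq_mul coeff (leqnn (b ^ 2)).
have := leq_mul (leqnn (16 * m.+1 ^ 2)) IHm.
by rewrite bin_step [16 ^ m.+1]expnS !expnMn; lia.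
Qed.

Lemma mid_bin_sqr_lb p :
  (2 * p).+1 * 4 ^ (2 * p).+1 <= 16 * (p.+1 * 'C((2 * p).+1, p.+1)) ^ 2.
Proof.
rewrite -mul_bin_diag /= expnS expnM.
have := central_bin_sqr_lb p; set b := 'C(2 * p, p).
by rewrite !expnMn; nia.
Qed.

Lemma odd_sum_addb (f : nat -> bool) j :
  odd (\sum_(i < j) (f i (+) f i.+1)) = f 0 (+) f j.
Proof.
elim: j => [|j IHj]; first by rewrite big_ord0 addbb.
rewrite big_ord_recr /= oddD IHj oddb.
by case: (f 0); case: (f j); case: (f j.+1).
Qed.

Section MajorityToXOR.

Variable k : nat.

(* Out-of-range indices i > k are clamped to 0 by inord; only i <= k is used. *)
Definition bit (x : cube k.+1) (i : nat) : bool := x (inord i).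

Definition maj_xor (x : cube k.+1) : cube k.+1 :=
  [ffun i : 'I_k.+1 => if i < k then bit x i (+) bit x i.+1
                       else Majority x (+) bit x 0 (+) bit x k].

Lemma XOR_maj_xor (x : cube k.+1) : Majority x = XOR (maj_xor x).
Proof.
rewrite /XOR big_ord_recr /= oddD !ffunE /= ltnn oddb.
rewrite (eq_bigr (fun i : 'I_k => bit x i (+) bit x i.+1 : nat)); last first.
  by move=> i _; rewrite ffunE /= ltn_ord.
rewrite odd_sum_addb.
by case: (Majority x); case: (bit x 0); case: (bit x k).
Qed.

Lemma eq_or_compl_adjacent_addb (x y : cube k.+1) :
  (forall i, i < k -> bit x i (+) bit x i.+1 = bit y i (+) bit y i.+1) ->
  y = x \/ y = cube_compl x.
Proof.
move=> eq_adj.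
have diff_const i : i <= k -> bit x i (+) bit y i = bit x 0 (+) bit y 0.
  elim: i => [// | i IHi] lt_ik; rewrite -(IHi (ltnW lt_ik)).
  move: (eq_adj i lt_ik).
  by case: (bit x i); case: (bit y i); case: (bit x i.+1); case: (bit y i.+1).
have bitE (z : cube k.+1) (i : 'I_k.+1) : bit z i = z i.
  by rewrite /bit inord_val.
case: (bit x 0 (+) bit y 0) diff_const => diff_const; [right | left];
  apply/ffunP => i; rewrite ?ffunE; have := diff_const i (ltn_ord i);
  by rewrite !bitE; case: (x i); case: (y i).
Qed.

Lemma maj_xor_inj : odd k.+1 -> injective maj_xor.
Proof.
move=> odd_n x y /ffunP eq_xy.
have [// | y_compl] : y = x \/ y = cube_compl x.
  apply: eq_or_compl_adjacent_addb => i lt_ik.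
  by have := eq_xy (Ordinal (leqW lt_ik)); rewrite !ffunE /= lt_ik.
have := eq_xy ord_max; rewrite !ffunE /= ltnn y_compl Majority_compl //.
by rewrite /bit !ffunE; case: (Majority x); case: (x _); case: (x _).
Qed.

Lemma dist_maj_xor (x y : cube k.+1) :
  dist (maj_xor x) (maj_xor y) <= 3 * dist x y.
Proof.
have [-> | ne_xy] := eqVneq x y.
  by rewrite [dist _ _]dist_sum big1 // => i _; rewrite eqxx.
have dist_gt0 : 0 < dist x y by rewrite lt0n dist_eq0.
set dn := fun i : nat => (bit x i != bit y i : nat).
have distE : dist x y = \sum_(0 <= i < k.+1) dn i.
  rewrite dist_sum big_mkord; apply: eq_bigr => i _.
  by rewrite /dn /bit inord_val.
have le_dn_lo : \sum_(0 <= i < k) dn i <= dist x y.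
  by rewrite distE big_nat_recr //= leq_addr.
have le_dn_hi : \sum_(0 <= i < k) dn i.+1 <= dist x y.
  by rewrite distE big_nat_recl // leq_addl.
have le_adj : \sum_(i < k) (maj_xor x (widen_ord (leqnSn k) i)
                            != maj_xor y (widen_ord (leqnSn k) i) : nat)
              <= \sum_(0 <= i < k) dn i + \sum_(0 <= i < k) dn i.+1.
  rewrite -big_split /= big_mkord; apply: leq_sum => i _.
  rewrite !ffunE /= ltn_ord /dn.
  by case: (bit x i); case: (bit y i); case: (bit x i.+1); case: (bit y i.+1).
rewrite dist_sum big_ord_recr /=.
have le_last : (maj_xor x ord_max != maj_xor y ord_max : nat) <= 1.
  by case: (_ != _).
by apply: leq_trans (leq_add le_adj le_last) _; lia.
Qed.

End MajorityToXOR.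

Local Open Scope ring_scope.

Lemma sqrtC_le_ratio (C : numClosedFieldType) (n N S : nat) :
  (0 < N)%N -> (n * N ^ 2 <= (4 * S) ^ 2)%N ->
  4^-1 * sqrtC (n%:R) <= (S%:R / N%:R : C).
Proof.
move=> N_gt0 le_nS.
rewrite ler_pdivlMr ?ltr0n // -mulrA mulrC ler_pdivrMr ?ltr0n //.
rewrite -[X in _ * X <= _](@sqrCK _ N%:R) ?ler0n //.
rewrite -sqrtCM ?nnegrE ?ler0n ?exprn_ge0 //.
rewrite -[X in _ <= X](@sqrCK _ (S%:R * 4)) ?mulr_ge0 ?ler0n //.
rewrite ler_sqrtC ?nnegrE ?mulr_ge0 ?ler0n ?exprn_ge0 //.
by rewrite -natrM -!natrX -natrM ler_nat (mulnC S).
Qed.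

Lemma avgStretch_XOR_Majority_lb n (phi : {perm cube n}) : odd n ->
  mapping_from (@XOR n) (@Majority n) phi ->
  4^-1 * sqrtC (n%:R) <= avgStretch phi.
Proof.
move=> odd_n phi_map; have [p def_n] : exists p, n = (2 * p).+1.
  by exists n./2; have := odd_double_half n; rewrite odd_n; lia.
rewrite /avgStretch; under eq_bigr => x _ do rewrite -natr_sum.
rewrite -natr_sum -natrM; apply: sqrtC_le_ratio.
  by rewrite muln_gt0 expn_gt0 def_n.
set S := (\sum_(x : cube n) _)%N; set T := (p.+1 * 'C(n, p.+1))%N.
have nT_le_S : (n * T <= S)%N.
  have := sum_stretch_XOR_Majority phi_map.
  rewrite (@sum_weight n (fun k => `|2 * k - n|)%N) -/S.
  have := leq_mul (leqnn n) (@mul_bin_le_sum_deviation n p.+1 (ltac:(lia))).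
  by rewrite -/T; lia.
have := mid_bin_sqr_lb p; rewrite -def_n -/T.
rewrite (_ : 4 ^ n = (2 ^ n) ^ 2)%N; last by rewrite -expnM mulnC expnM.
move=> /(leq_mul (leqnn (n ^ 2))); have := leq_mul nT_le_S nT_le_S.
by rewrite !expnMn; lia.
Qed.

Lemma exists_Lipschitz_Majority_XOR n : odd n ->
  exists psi : {perm cube n},
    mapping_from (@Majority n) (@XOR n) psi /\ Lipschitz 3%:R psi.
Proof.
case: n => [// | k] odd_n; exists (perm (maj_xor_inj odd_n)); split.
  by move=> x; rewrite permE XOR_maj_xor.
by move=> x y; rewrite !permE -natrM ler_nat dist_maj_xor.
Qed.

Theorem theorem3 :
  (exists c : algC, 0 < c /\
     forall n : nat, odd n ->
       forall phi : {perm cube n},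
         mapping_from (@XOR n) (@Majority n) phi ->
         c * sqrtC (n%:R) <= avgStretch phi)
  /\
  (exists C : algC, forall n : nat, odd n ->
     exists psi : {perm cube n},
       mapping_from (@Majority n) (@XOR n) psi /\ Lipschitz C psi).
Proof.
split; last by exists 3%:R; exact: exists_Lipschitz_Majority_XOR.
exists 4^-1; split; first by rewrite invr_gt0 ltr0n.
by move=> n odd_n phi; exact: avgStretch_XOR_Majority_lb.
Qed.
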